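(* Assume the total harvested energy is finite. The optimal value of problem (P) equals the optimal value of problem (Q): $$\max_{\{\bar p_{k,i}\}}\ \sum_{i=1}^N R(\bar p_{1,i},\bar p_{2,i})$$ subject to $\sum_{n=1}^{i}(E_{k,n}-\bar p_{k,n})\ge 0$ and $\bar p_{k,i}\ge0$ for $k=1,2$, $i=1,\dots,N$. Moreover, suppose $\{\bar p_{k,i}\}$ is optimal for (Q), and for each $i$ the pair $(\delta_{1,i},\delta_{2,i})$ attains the maximum defining $R(\bar p_{1,i},\bar p_{2,i})$. Set $p_{k,i}=\bar p_{k,i}-\delta_{k,i}+\alpha_j\delta_{j,i}$ ($j\ne k$). Then $\{p_{k,i},\delta_{k,i}\}$ is an optimal solution of (P).
   Context: Two-way channel setting. There are two nodes, $N$ unit-length slots, channel gains $h_1,h_2>0$, noise powers $\sigma_1^2,\sigma_2^2>0$, efficiencies $\alpha_1,\alpha_2\in[0,1]$, and harvested energies $E_{k,i}\ge0$. A power policy is $\{p_{k,i},\delta_{k,i}\}$. Here $p_{k,i}$ is the transmit power of $T_k$ in slot $i$, and $\delta_{k,i}$ is the energy $T_k$ sends to $T_j$ ($j\ne k$), of which $\alpha_k\delta_{k,i}$ is received. The battery state is $$S_{k,i}=\sum_{n=1}^{i}(E_{k,n}-p_{k,n}+\alpha_j\delta_{j,n}-\delta_{k,n}).$$ Let $$C(p_1,p_2)=\tfrac12\log(1+h_1p_1/\sigma_2^2)+\tfrac12\log(1+h_2p_2/\sigma_1^2).$$ Problem (P) is to maximize $\sum_i C(p_{1,i},p_{2,i})$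 subject to $S_{k,i}\ge0$, $p_{k,i}\ge0$ and $\delta_{k,i}\ge0$ for all $k,i$. For $\pi_1,\pi_2\ge0$, define $$R(\pi_1,\pi_2)=\max\{C(\pi_1-\delta_1+\alpha_2\delta_2,\ \pi_2-\delta_2+\alpha_1\delta_1):\ 0\le\delta_k\le\pi_k,\ k=1,2\}.$$ *)

From Stdlib Require Import Reals List ClassicalEpsilon.
Import ListNotations.
Open Scope R_scope.

(* psum f i = f 1 + ... + f i  (slots are indexed 1..N) *)
Definition psum (f : nat -> R) (i : nat) : R :=
  fold_right Rplus 0 (map f (seq 1 i)).

(* C(p1,p2) = 1/2 log(1 + h1 p1/s2) + 1/2 log(1 + h2 p2/s1), s_k = sigma_k^2 *)
Definition Cap (h1 h2 s1 s2 : R) (p1 p2 : R) : R :=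
  / 2 * ln (1 + h1 * p1 / s2) + / 2 * ln (1 + h2 * p2 / s1).

Definition Rset (h1 h2 s1 s2 a1 a2 : R) (pi1 pi2 : R) (r : R) : Prop :=
  exists d1 d2, 0 <= d1 <= pi1 /\ 0 <= d2 <= pi2 /\
    r = Cap h1 h2 s1 s2 (pi1 - d1 + a2 * d2) (pi2 - d2 + a1 * d1).

Definition is_maximizer (h1 h2 s1 s2 a1 a2 : R) (pi1 pi2 d1 d2 : R) : Prop :=
  0 <= d1 <= pi1 /\ 0 <= d2 <= pi2 /\
  forall e1 e2, 0 <= e1 <= pi1 -> 0 <= e2 <= pi2 ->
    Cap h1 h2 s1 s2 (pi1 - e1 + a2 * e2) (pi2 - e2 + a1 * e1)
    <= Cap h1 h2 s1 s2 (pi1 - d1 + a2 * d2) (pi2 - d2 + a1 * d1).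

(* R(pi1,pi2): the maximum (= least upper bound, which is attained) of Rset *)
Definition Rfun (h1 h2 s1 s2 a1 a2 : R) (pi1 pi2 : R) : R :=
  epsilon (inhabits 0) (fun r => is_lub (Rset h1 h2 s1 s2 a1 a2 pi1 pi2) r).

(* battery state S_{k,i} for node k with own (E,p,delta) and partner delta dj,
   partner efficiency aj *)
Definition battery (E p d dj : nat -> R) (aj : R) (i : nat) : R :=
  psum (fun n => E n - p n + aj * dj n - d n) i.

Definition feasibleP (N : nat) (a1 a2 : R) (E1 E2 p1 p2 d1 d2 : nat -> R) : Prop :=
  forall i, (1 <= i <= N)%nat ->
    0 <= battery E1 p1 d1 d2 a2 i /\ 0 <= battery E2 p2 d2 d1 a1 i /\
    0 <= p1 i /\ 0 <= p2 i /\ 0 <= d1 i /\ 0 <= d2 i.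

Definition objP (N : nat) (h1 h2 s1 s2 : R) (p1 p2 : nat -> R) : R :=
  psum (fun i => Cap h1 h2 s1 s2 (p1 i) (p2 i)) N.

Definition valuesP N h1 h2 s1 s2 a1 a2 E1 E2 (v : R) : Prop :=
  exists p1 p2 d1 d2, feasibleP N a1 a2 E1 E2 p1 p2 d1 d2 /\
    v = objP N h1 h2 s1 s2 p1 p2.

Definition optimalP N h1 h2 s1 s2 a1 a2 E1 E2 (p1 p2 d1 d2 : nat -> R) : Prop :=
  feasibleP N a1 a2 E1 E2 p1 p2 d1 d2 /\
  forall q1 q2 e1 e2, feasibleP N a1 a2 E1 E2 q1 q2 e1 e2 ->
    objP N h1 h2 s1 s2 q1 q2 <= objP N h1 h2 s1 s2 p1 p2.

Definition feasibleQ (N : nat) (E1 E2 pb1 pb2 : nat -> R) : Prop :=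
  forall i, (1 <= i <= N)%nat ->
    0 <= psum (fun n => E1 n - pb1 n) i /\ 0 <= psum (fun n => E2 n - pb2 n) i /\
    0 <= pb1 i /\ 0 <= pb2 i.

Definition objQ N h1 h2 s1 s2 a1 a2 (pb1 pb2 : nat -> R) : R :=
  psum (fun i => Rfun h1 h2 s1 s2 a1 a2 (pb1 i) (pb2 i)) N.

Definition valuesQ N h1 h2 s1 s2 a1 a2 E1 E2 (v : R) : Prop :=
  exists pb1 pb2, feasibleQ N E1 E2 pb1 pb2 /\ v = objQ N h1 h2 s1 s2 a1 a2 pb1 pb2.

Definition optimalQ N h1 h2 s1 s2 a1 a2 E1 E2 (pb1 pb2 : nat -> R) : Prop :=
  feasibleQ N E1 E2 pb1 pb2 /\
  forall q1 q2, feasibleQ N E1 E2 q1 q2 ->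
    objQ N h1 h2 s1 s2 a1 a2 q1 q2 <= objQ N h1 h2 s1 s2 a1 a2 pb1 pb2.

From Pilot Require Import Defs.
From Stdlib Require Import Reals List ClassicalEpsilon Classical Lra Lia.
Open Scope R_scope.

(* A solution of (Q) together with maximising transfers is a solution of (P) with the same
   rate, and near-maximising transfers give (P) values arbitrarily close to any (Q) value.
   Conversely, a solution of (P) may ship energy ahead of time, which (Q) cannot express.
   The lazy schedule defers every transfer to the slot where the receiver would otherwise
   run dry and then sends exactly its deficit.  Its virtual batteries stay nonnegative,
   and their surplus over the batteries of the given (P) solution stays in the cone spanned
   by the net effects (1, -a1) and (-a2, 1) of unit transfers; this is what makes the deficit
   always coverable by the partner.  Each slot of the lazy schedule is a feasible transfer
   inside R, so every (P) value is dominated by a (Q) value and the suprema coincide. *)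

Lemma fold_right_Rplus_init (l : list R) (a : R) :
  fold_right Rplus a l = fold_right Rplus 0 l + a.
Proof. induction l as [|x l IH]; simpl; [lra | rewrite IH; lra]. Qed.

Lemma psum_succ (f : nat -> R) (i : nat) : psum f (S i) = psum f i + f (S i).
Proof.
  unfold psum; rewrite seq_S, map_app, fold_right_app; simpl.
  rewrite fold_right_Rplus_init; replace (1 + i)%nat with (S i) by lia; lra.
Qed.

Lemma psum_eq (f g : nat -> R) (n : nat) :
  (forall i, (1 <= i <= n)%nat -> f i = g i) -> psum f n = psum g n.
Proof.
  induction n as [|n IH]; intros Hfg; [reflexivity|].
  rewrite !psum_succ, IH, Hfg; [reflexivity | lia | intros; apply Hfg; lia].
Qed.

Lemma psum_le (f g : nat -> R) (n : nat) :
  (forall i, (1 <= i <= n)%nat -> f i <= g i) -> psum f n <= psum g n.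
Proof.
  induction n as [|n IH]; intros Hfg; [apply Rle_refl|].
  rewrite !psum_succ.
  assert (f (S n) <= g (S n)) by (apply Hfg; lia).
  assert (psum f n <= psum g n) by (apply IH; intros; apply Hfg; lia).
  lra.
Qed.

Lemma psum_sub (f g : nat -> R) (n : nat) :
  psum (fun i => f i - g i) n = psum f n - psum g n.
Proof.
  induction n as [|n IH]; [unfold psum; simpl; lra|].
  rewrite !psum_succ, IH; lra.
Qed.

Lemma psum_const (c : R) (n : nat) : psum (fun _ => c) n = INR n * c.
Proof.
  induction n as [|n IH]; [unfold psum; simpl; lra|].
  rewrite psum_succ, IH, S_INR; lra.
Qed.

Lemma psum_ge0 (f : nat -> R) (n : nat) :
  (forall i, (1 <= i <= n)%nat -> 0 <= f i) -> 0 <= psum f n.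
Proof.
  intros Hf; rewrite <- (Rmult_0_r (INR n)), <- psum_const.
  now apply psum_le.
Qed.

Lemma psum_le_index (f : nat -> R) (i j : nat) :
  (forall n, (1 <= n <= j)%nat -> 0 <= f n) -> (i <= j)%nat -> psum f i <= psum f j.
Proof.
  intros Hf Hij; induction Hij as [|j Hij IH]; [apply Rle_refl|].
  rewrite psum_succ.
  assert (0 <= f (S j)) by (apply Hf; lia).
  assert (psum f i <= psum f j) by (apply IH; intros; apply Hf; lia).
  lra.
Qed.

Lemma term_le_psum (f : nat -> R) (i : nat) :
  (forall n, (1 <= n <= i)%nat -> 0 <= f n) -> (1 <= i)%nat -> f i <= psum f i.
Proof.
  intros Hf Hi; destruct i as [|i]; [lia|].
  rewrite psum_succ.
  assert (0 <= psum f i) by (apply psum_ge0; intros; apply Hf; lia).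
  lra.
Qed.

Lemma battery_succ (E p d dj : nat -> R) (aj : R) (i : nat) :
  battery E p d dj aj (S i) =
  battery E p d dj aj i + (E (S i) - p (S i) + aj * dj (S i) - d (S i)).
Proof. apply psum_succ. Qed.

Lemma is_lub_approx (A : R -> Prop) (m eps : R) :
  is_lub A m -> 0 < eps -> exists x, A x /\ m - eps < x.
Proof.
  intros [_ Hleast] Heps.
  apply NNPP; intros Hnone.
  assert (Hub : is_upper_bound A (m - eps)).
  { intros x Hx; apply Rnot_lt_le; intros Hlt; apply Hnone; now exists x. }
  specialize (Hleast _ Hub); lra.
Qed.

Lemma is_lub_of_cofinal (A B : R -> Prop) (v : R) :
  is_lub B v ->
  (forall a, A a -> exists b, B b /\ a <= b) ->
  (forall b eps, B b -> 0 < eps -> exists a, A a /\ b - eps <= a) ->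
  is_lub A v.
Proof.
  intros [HubB HleastB] HAB HBA; split.
  - intros a Ha; destruct (HAB a Ha) as [b [Hb Hab]].
    apply Rle_trans with b; [exact Hab | now apply HubB].
  - intros u HubA; apply HleastB; intros b Hb.
    apply Rle_plus_epsilon; intros eps Heps.
    destruct (HBA b eps Hb Heps) as [a [Ha Hba]].
    specialize (HubA a Ha); lra.
Qed.

Lemma ln_le (x y : R) : 0 < x -> x <= y -> ln x <= ln y.
Proof. intros Hx [Hlt | <-]; [left; now apply ln_increasing | apply Rle_refl]. Qed.

Definition transfer_cone (a1 a2 x1 x2 : R) : Prop :=
  0 <= x1 + a2 * x2 /\ 0 <= a1 * x1 + x2.

(* [t_k] is what node [k] sends in a slot where the batteries would reach [b] without
   transfers; the bound [a2 * t2 <= Rmax 0 (- b1)] makes node 1 consume within the slot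
   everything it receives. *)
Definition admissible_transfer (a1 a2 b1 b2 S1 S2 t1 t2 : R) : Prop :=
  0 <= t1 /\ 0 <= t2 /\ a1 * t1 <= Rmax 0 (- b2) /\ a2 * t2 <= Rmax 0 (- b1) /\
  0 <= b1 - t1 + a2 * t2 /\ 0 <= b2 - t2 + a1 * t1 /\
  transfer_cone a1 a2 (b1 - t1 + a2 * t2 - S1) (b2 - t2 + a1 * t1 - S2).

Lemma admissible_transfer_swap (a1 a2 b1 b2 S1 S2 t1 t2 : R) :
  admissible_transfer a2 a1 b2 b1 S2 S1 t2 t1 ->
  admissible_transfer a1 a2 b1 b2 S1 S2 t1 t2.
Proof. unfold admissible_transfer, transfer_cone; intuition lra. Qed.

Lemma transfer_cone_add_transfer (a1 a2 x1 x2 d1 d2 : R) :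
  0 <= a1 <= 1 -> 0 <= a2 <= 1 -> 0 <= d1 -> 0 <= d2 ->
  transfer_cone a1 a2 x1 x2 ->
  transfer_cone a1 a2 (x1 + d1 - a2 * d2) (x2 + d2 - a1 * d1).
Proof.
  unfold transfer_cone; intros Ha1 Ha2 Hd1 Hd2 [Hx1 Hx2].
  assert (0 <= (1 - a1 * a2) * d1) by (apply Rmult_le_pos; nra).
  assert (0 <= (1 - a1 * a2) * d2) by (apply Rmult_le_pos; nra).
  split; nra.
Qed.

Lemma admissible_borrow (a1 a2 b1 b2 S1 S2 : R) :
  0 <= a1 <= 1 -> 0 <= a2 <= 1 -> 0 <= S1 -> 0 <= S2 -> b1 < 0 ->
  transfer_cone a1 a2 (b1 - S1) (b2 - S2) ->
  admissible_transfer a1 a2 b1 b2 S1 S2 0 (- b1 / a2).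
Proof.
  intros Ha1 Ha2 HS1 HS2 Hb1 [Hc1 _].
  assert (Ha2pos : 0 < a2).
  { destruct Ha2 as [[Hpos | Hzero] _]; [exact Hpos | subst; lra]. }
  set (t := - b1 / a2).
  assert (Ht : a2 * t = - b1) by (unfold t; field; lra).
  assert (Hgap : S1 <= a2 * (b2 - t - S2)) by nra.
  assert (Hrest : S1 <= b2 - t - S2).
  { apply Rnot_lt_le; intros Hlt; nra. }
  assert (0 <= t) by nra.
  unfold admissible_transfer, transfer_cone.
  rewrite (Rmax_right 0 (- b1)) by lra.
  pose proof (Rmax_l 0 (- b2)).
  repeat split; nra.
Qed.

(* The division by [a2] (resp. [a1]) only matters when [a2 > 0]: a surplus in the cone forces
   it as soon as [b1 < 0] (see [admissible_borrow]). *)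
Definition lazy_transfer (a1 a2 b1 b2 : R) : R * R :=
  if Rlt_dec b1 0 then (0, - b1 / a2)
  else if Rlt_dec b2 0 then (- b2 / a1, 0)
  else (0, 0).

Lemma lazy_transfer_admissible (a1 a2 b1 b2 S1 S2 : R) :
  0 <= a1 <= 1 -> 0 <= a2 <= 1 -> 0 <= S1 -> 0 <= S2 ->
  transfer_cone a1 a2 (b1 - S1) (b2 - S2) ->
  admissible_transfer a1 a2 b1 b2 S1 S2
    (fst (lazy_transfer a1 a2 b1 b2)) (snd (lazy_transfer a1 a2 b1 b2)).
Proof.
  intros Ha1 Ha2 HS1 HS2 Hc; unfold lazy_transfer.
  destruct (Rlt_dec b1 0) as [Hb1 | Hb1]; [now apply admissible_borrow|].
  destruct (Rlt_dec b2 0) as [Hb2 | Hb2]; simpl.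
  - apply admissible_transfer_swap, admissible_borrow; auto.
    destruct Hc; split; lra.
  - destruct Hc as [Hc1 Hc2].
    unfold admissible_transfer, transfer_cone.
    pose proof (Rmax_l 0 (- b1)); pose proof (Rmax_l 0 (- b2)).
    repeat split; lra.
Qed.

Fixpoint lazy_battery (a1 a2 : R) (e1 e2 : nat -> R) (i : nat) : R * R :=
  match i with
  | O => (0, 0)
  | S k =>
    let b1 := fst (lazy_battery a1 a2 e1 e2 k) + e1 (S k) in
    let b2 := snd (lazy_battery a1 a2 e1 e2 k) + e2 (S k) in
    let t := lazy_transfer a1 a2 b1 b2 in
    (b1 - fst t + a2 * snd t, b2 - snd t + a1 * fst t)
  end.

Definition lazy_schedule (a1 a2 : R) (e1 e2 : nat -> R) (i : nat) : R * R :=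
  lazy_transfer a1 a2
    (fst (lazy_battery a1 a2 e1 e2 (pred i)) + e1 i)
    (snd (lazy_battery a1 a2 e1 e2 (pred i)) + e2 i).

Section LazySchedule.

Variables (N : nat) (a1 a2 : R) (E1 E2 p1 p2 d1 d2 : nat -> R).
Hypotheses (Ha1 : 0 <= a1 <= 1) (Ha2 : 0 <= a2 <= 1)
  (HE1 : forall i, 0 <= E1 i) (HE2 : forall i, 0 <= E2 i)
  (HP : feasibleP N a1 a2 E1 E2 p1 p2 d1 d2).

Local Notation e1 := (fun n => E1 n - p1 n).
Local Notation e2 := (fun n => E2 n - p2 n).
Local Notation B := (lazy_battery a1 a2 e1 e2).
Local Notation t1 := (fun n => fst (lazy_schedule a1 a2 e1 e2 n)).
Local Notation t2 := (fun n => snd (lazy_schedule a1 a2 e1 e2 n)).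
Local Notation S1 := (battery E1 p1 d1 d2 a2).
Local Notation S2 := (battery E2 p2 d2 d1 a1).

Definition lazy_invariant (i : nat) : Prop :=
  0 <= fst (B i) /\ 0 <= snd (B i) /\
  transfer_cone a1 a2 (fst (B i) - S1 i) (snd (B i) - S2 i).

Lemma lazy_step (k : nat) : (k < N)%nat -> lazy_invariant k ->
  admissible_transfer a1 a2 (fst (B k) + e1 (S k)) (snd (B k) + e2 (S k))
    (S1 (S k)) (S2 (S k)) (t1 (S k)) (t2 (S k)).
Proof.
  intros Hk [HB1 [HB2 Hcone]].
  destruct (HP (S k)) as [HS1 [HS2 [_ [_ [Hd1 Hd2]]]]]; [lia|].
  apply lazy_transfer_admissible; auto.
  rewrite !battery_succ.
  replace (fst (B k) + e1 (S k) - (S1 k + (E1 (S k) - p1 (S k) + a2 * d2 (S k) - d1 (S k))))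
    with (fst (B k) - S1 k + d1 (S k) - a2 * d2 (S k)) by ring.
  replace (snd (B k) + e2 (S k) - (S2 k + (E2 (S k) - p2 (S k) + a1 * d1 (S k) - d2 (S k))))
    with (snd (B k) - S2 k + d2 (S k) - a1 * d1 (S k)) by ring.
  now apply transfer_cone_add_transfer.
Qed.

Lemma lazy_invariant_holds (i : nat) : (i <= N)%nat -> lazy_invariant i.
Proof.
  induction i as [|k IH]; intros Hk.
  - unfold lazy_invariant, transfer_cone, battery, psum; simpl; lra.
  - destruct (lazy_step k) as [_ [_ [_ [_ [HB1 [HB2 Hcone]]]]]]; [lia | apply IH; lia |].
    exact (conj HB1 (conj HB2 Hcone)).
Qed.

Lemma lazy_battery_psum (i : nat) :
  fst (B i) = psum (fun n => E1 n - (p1 n + t1 n - a2 * t2 n)) i /\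
  snd (B i) = psum (fun n => E2 n - (p2 n + t2 n - a1 * t1 n)) i.
Proof.
  induction i as [|k [IH1 IH2]]; [split; reflexivity|].
  rewrite !psum_succ, <- IH1, <- IH2; unfold lazy_schedule; simpl; split; ring.
Qed.

Lemma feasibleP_lazy_transfers :
  exists t1 t2 : nat -> R,
    feasibleQ N E1 E2
      (fun i => p1 i + t1 i - a2 * t2 i) (fun i => p2 i + t2 i - a1 * t1 i) /\
    forall i, (1 <= i <= N)%nat ->
      0 <= t1 i <= p1 i + t1 i - a2 * t2 i /\ 0 <= t2 i <= p2 i + t2 i - a1 * t1 i.
Proof.
  assert (Hslot : forall i, (1 <= i <= N)%nat ->
    0 <= t1 i <= p1 i + t1 i - a2 * t2 i /\ 0 <= t2 i <= p2 i + t2 i - a1 * t1 i).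
  { intros [|k] Hk; [lia|].
    destruct (lazy_invariant_holds k) as [HB1 [HB2 _]]; [lia|].
    destruct (lazy_step k) as [Ht1 [Ht2 [Hr1 [Hr2 _]]]]; [lia | now apply lazy_invariant_holds; lia |].
    destruct (HP (S k)) as [_ [_ [Hp1 [Hp2 _]]]]; [lia|].
    pose proof (HE1 (S k)); pose proof (HE2 (S k)).
    assert (Rmax 0 (- (fst (B k) + e1 (S k))) <= p1 (S k)) by (apply Rmax_lub; lra).
    assert (Rmax 0 (- (snd (B k) + e2 (S k))) <= p2 (S k)) by (apply Rmax_lub; lra).
    split; split; lra. }
  exists t1, t2; split; [|exact Hslot].
  intros i Hi.
  destruct (lazy_invariant_holds i) as [HB1 [HB2 _]]; [lia|].
  destruct (lazy_battery_psum i) as [Hpsum1 Hpsum2].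
  destruct (Hslot i Hi) as [[Ht1 Hpb1] [Ht2 Hpb2]].
  rewrite <- Hpsum1, <- Hpsum2; repeat split; lra.
Qed.

End LazySchedule.

Lemma feasibleQ_power_le_total (N : nat) (E p : nat -> R) (i : nat) :
  (forall n, 0 <= E n) ->
  (forall n, (1 <= n <= N)%nat -> 0 <= psum (fun m => E m - p m) n /\ 0 <= p n) ->
  (1 <= i <= N)%nat -> p i <= psum E N.
Proof.
  intros HE Hp Hi.
  assert (p i <= psum p i) by (apply term_le_psum; [intros; apply Hp; lia | lia]).
  assert (Hsurplus : 0 <= psum (fun m => E m - p m) i) by (apply Hp; exact Hi).
  rewrite psum_sub in Hsurplus.
  assert (psum E i <= psum E N) by (apply psum_le_index; [intros; apply HE | lia]).
  lra.
Qed.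

Lemma feasibleQ_feasibleP (N : nat) (a1 a2 : R) (E1 E2 pb1 pb2 d1 d2 : nat -> R) :
  0 <= a1 -> 0 <= a2 ->
  feasibleQ N E1 E2 pb1 pb2 ->
  (forall i, (1 <= i <= N)%nat -> 0 <= d1 i <= pb1 i /\ 0 <= d2 i <= pb2 i) ->
  feasibleP N a1 a2 E1 E2
    (fun i => pb1 i - d1 i + a2 * d2 i) (fun i => pb2 i - d2 i + a1 * d1 i) d1 d2.
Proof.
  intros Ha1 Ha2 HQ Hd i Hi.
  destruct (HQ i Hi) as [HB1 [HB2 _]], (Hd i Hi) as [[Hd1 Hd1'] [Hd2 Hd2']].
  unfold battery; repeat split; try nra.
  - rewrite (psum_eq _ (fun n => E1 n - pb1 n)); [exact HB1 | intros; ring].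
  - rewrite (psum_eq _ (fun n => E2 n - pb2 n)); [exact HB2 | intros; ring].
Qed.

Lemma feasibleQ_zero (N : nat) (E1 E2 : nat -> R) :
  (forall i, 0 <= E1 i) -> (forall i, 0 <= E2 i) ->
  feasibleQ N E1 E2 (fun _ => 0) (fun _ => 0).
Proof.
  intros HE1 HE2 i Hi.
  assert (forall E : nat -> R, (forall n, 0 <= E n) -> 0 <= psum (fun n => E n - 0) i)
    by (intros E HE; apply psum_ge0; intros n _; specialize (HE n); lra).
  repeat split; auto; lra.
Qed.

Section Channel.

Variables (h1 h2 s1 s2 a1 a2 : R).
Hypotheses (Hh1 : 0 < h1) (Hh2 : 0 < h2) (Hs1 : 0 < s1) (Hs2 : 0 < s2)
  (Ha1 : 0 <= a1 <= 1) (Ha2 : 0 <= a2 <= 1).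

Local Notation Cap := (Defs.Cap h1 h2 s1 s2).
Local Notation Rset := (Defs.Rset h1 h2 s1 s2 a1 a2).
Local Notation Rfun := (Defs.Rfun h1 h2 s1 s2 a1 a2).

Lemma Cap_le (x1 x2 y1 y2 : R) :
  0 <= x1 <= y1 -> 0 <= x2 <= y2 -> Cap x1 x2 <= Cap y1 y2.
Proof.
  intros Hx1 Hx2; unfold Defs.Cap, Rdiv.
  pose proof (Rinv_0_lt_compat _ Hs1); pose proof (Rinv_0_lt_compat _ Hs2).
  assert (0 <= h1 * x1 * / s2 <= h1 * y1 * / s2) by (split; apply Rmult_le_compat_r || apply Rmult_le_pos; nra).
  assert (0 <= h2 * x2 * / s1 <= h2 * y2 * / s1) by (split; apply Rmult_le_compat_r || apply Rmult_le_pos; nra).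
  assert (ln (1 + h1 * x1 * / s2) <= ln (1 + h1 * y1 * / s2)) by (apply ln_le; lra).
  assert (ln (1 + h2 * x2 * / s1) <= ln (1 + h2 * y2 * / s1)) by (apply ln_le; lra).
  lra.
Qed.



Lemma Rset_upper_bound (pi1 pi2 : R) :
  is_upper_bound (Rset pi1 pi2) (Cap (pi1 + pi2) (pi1 + pi2)).
Proof. intros r [e1 [e2 [He1 [He2 ->]]]]; apply Cap_le; split; nra. Qed.

Lemma Rfun_is_lub (pi1 pi2 : R) :
  0 <= pi1 -> 0 <= pi2 -> is_lub (Rset pi1 pi2) (Rfun pi1 pi2).
Proof.
  intros Hpi1 Hpi2.
  assert (Hne : exists r, Rset pi1 pi2 r).
  { exists (Cap (pi1 - 0 + a2 * 0) (pi2 - 0 + a1 * 0)), 0, 0; repeat split; lra. }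
  destruct (completeness _ (ex_intro _ _ (Rset_upper_bound pi1 pi2)) Hne) as [m Hm].
  unfold Defs.Rfun; apply epsilon_spec; now exists m.
Qed.

Lemma Rfun_le_Cap_sum (pi1 pi2 : R) :
  0 <= pi1 -> 0 <= pi2 -> Rfun pi1 pi2 <= Cap (pi1 + pi2) (pi1 + pi2).
Proof. intros Hpi1 Hpi2; apply (Rfun_is_lub pi1 pi2 Hpi1 Hpi2), Rset_upper_bound. Qed.

Lemma Cap_le_Rfun (pi1 pi2 e1 e2 : R) :
  0 <= e1 <= pi1 -> 0 <= e2 <= pi2 ->
  Cap (pi1 - e1 + a2 * e2) (pi2 - e2 + a1 * e1) <= Rfun pi1 pi2.
Proof.
  intros He1 He2; apply (Rfun_is_lub pi1 pi2); [lra | lra |].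
  now exists e1, e2.
Qed.

Lemma Rfun_approx (pi1 pi2 eps : R) :
  0 <= pi1 -> 0 <= pi2 -> 0 < eps ->
  exists e1 e2, 0 <= e1 <= pi1 /\ 0 <= e2 <= pi2 /\
    Rfun pi1 pi2 - eps < Cap (pi1 - e1 + a2 * e2) (pi2 - e2 + a1 * e1).
Proof.
  intros Hpi1 Hpi2 Heps.
  destruct (is_lub_approx _ _ _ (Rfun_is_lub pi1 pi2 Hpi1 Hpi2) Heps)
    as [r [[e1 [e2 [He1 [He2 ->]]]] Hr]].
  now exists e1, e2.
Qed.

Lemma Rfun_of_maximizer (pi1 pi2 d1 d2 : R) :
  is_maximizer h1 h2 s1 s2 a1 a2 pi1 pi2 d1 d2 ->
  Rfun pi1 pi2 = Cap (pi1 - d1 + a2 * d2) (pi2 - d2 + a1 * d1).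
Proof.
  intros [Hd1 [Hd2 Hmax]].
  apply (is_lub_u (Rset pi1 pi2)); [apply Rfun_is_lub; lra|].
  split.
  - intros r [e1 [e2 [He1 [He2 ->]]]]; now apply Hmax.
  - intros b Hb; apply Hb; now exists d1, d2.
Qed.

Variables (N : nat) (E1 E2 : nat -> R).
Hypotheses (HE1 : forall i, 0 <= E1 i) (HE2 : forall i, 0 <= E2 i).

Local Notation objP := (objP N h1 h2 s1 s2).
Local Notation objQ := (objQ N h1 h2 s1 s2 a1 a2).

Lemma objQ_le_total (pb1 pb2 : nat -> R) :
  feasibleQ N E1 E2 pb1 pb2 ->
  objQ pb1 pb2 <= INR N * Cap (psum E1 N + psum E2 N) (psum E1 N + psum E2 N).
Proof.
  intros HQ; unfold Defs.objQ; rewrite <- psum_const; apply psum_le; intros i Hi.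
  assert (pb1 i <= psum E1 N /\ pb2 i <= psum E2 N) as [Hle1 Hle2].
  { split; apply (feasibleQ_power_le_total N); auto;
      intros n Hn; destruct (HQ n Hn) as [? [? [? ?]]]; auto. }
  destruct (HQ i Hi) as [_ [_ [Hpb1 Hpb2]]].
  apply Rle_trans with (Cap (pb1 i + pb2 i) (pb1 i + pb2 i));
    [now apply Rfun_le_Cap_sum | apply Cap_le; lra].
Qed.

Lemma objP_le_objQ (p1 p2 d1 d2 : nat -> R) :
  feasibleP N a1 a2 E1 E2 p1 p2 d1 d2 ->
  exists pb1 pb2, feasibleQ N E1 E2 pb1 pb2 /\ objP p1 p2 <= objQ pb1 pb2.
Proof.
  intros HP.
  destruct (feasibleP_lazy_transfers N a1 a2 E1 E2 p1 p2 d1 d2 Ha1 Ha2 HE1 HE2 HP)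
    as [t1 [t2 [HQ Ht]]].
  exists (fun i => p1 i + t1 i - a2 * t2 i), (fun i => p2 i + t2 i - a1 * t1 i).
  split; [exact HQ|].
  apply psum_le; intros i Hi.
  destruct (Ht i Hi) as [Ht1 Ht2].
  replace (p1 i) with ((p1 i + t1 i - a2 * t2 i) - t1 i + a2 * t2 i) at 1 by ring.
  replace (p2 i) with ((p2 i + t2 i - a1 * t1 i) - t2 i + a1 * t1 i) at 1 by ring.
  now apply Cap_le_Rfun.
Qed.

Lemma objQ_approx_by_objP (pb1 pb2 : nat -> R) (eps : R) :
  feasibleQ N E1 E2 pb1 pb2 -> 0 < eps ->
  exists v, valuesP N h1 h2 s1 s2 a1 a2 E1 E2 v /\ objQ pb1 pb2 - eps <= v.
Proof.
  intros HQ Heps.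
  pose proof (pos_INR N) as HN.
  set (eps' := eps / (INR N + 1)).
  assert (Heps' : 0 < eps') by (unfold eps'; apply Rdiv_lt_0_compat; lra).
  assert (Hsum : INR N * eps' <= eps).
  { unfold eps'; apply (Rmult_le_reg_r (INR N + 1)); [lra|].
    field_simplify; nra. }
  assert (Hslot : forall i, exists d : R * R, (1 <= i <= N)%nat ->
    (0 <= fst d <= pb1 i /\ 0 <= snd d <= pb2 i) /\
    Rfun (pb1 i) (pb2 i) - eps' <=
      Cap (pb1 i - fst d + a2 * snd d) (pb2 i - snd d + a1 * fst d)).
  { intros i; destruct (Compare_dec.le_dec 1 i), (Compare_dec.le_dec i N);
      try (exists (0, 0); lia).
    destruct (HQ i) as [_ [_ [Hpb1 Hpb2]]]; [lia|].
    destruct (Rfun_approx (pb1 i) (pb2 i) eps') as [e1 [e2 [He1 [He2 Happrox]]]]; auto.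
    exists (e1, e2); intros _; simpl; split; [split|]; lra. }
  destruct (choice _ Hslot) as [d Hd].
  set (q1 := fun i => pb1 i - fst (d i) + a2 * snd (d i)).
  set (q2 := fun i => pb2 i - snd (d i) + a1 * fst (d i)).
  exists (objP q1 q2); split.
  - exists q1, q2, (fun i => fst (d i)), (fun i => snd (d i)); split; [|reflexivity].
    apply feasibleQ_feasibleP; try lra; [exact HQ|].
    intros i Hi; apply Hd, Hi.
  - apply Rle_trans with (objQ pb1 pb2 - INR N * eps'); [lra|].
    unfold Defs.objQ, Defs.objP; rewrite <- psum_const, <- psum_sub.
    apply psum_le; intros i Hi; apply Hd, Hi.
Qed.
End Channel.

Theorem mainTheorem4 (N : nat) (h1 h2 s1 s2 a1 a2 : R) (E1 E2 : nat -> R)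
  (Hh1 : 0 < h1) (Hh2 : 0 < h2) (Hs1 : 0 < s1) (Hs2 : 0 < s2)
  (Ha1 : 0 <= a1 <= 1) (Ha2 : 0 <= a2 <= 1)
  (HE1 : forall i, 0 <= E1 i) (HE2 : forall i, 0 <= E2 i) :
  (exists v, is_lub (valuesP N h1 h2 s1 s2 a1 a2 E1 E2) v /\
             is_lub (valuesQ N h1 h2 s1 s2 a1 a2 E1 E2) v)
  /\
  (forall pb1 pb2 d1 d2 : nat -> R,
     optimalQ N h1 h2 s1 s2 a1 a2 E1 E2 pb1 pb2 ->
     (forall i, (1 <= i <= N)%nat ->
        is_maximizer h1 h2 s1 s2 a1 a2 (pb1 i) (pb2 i) (d1 i) (d2 i)) ->
     optimalP N h1 h2 s1 s2 a1 a2 E1 E2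
       (fun i => pb1 i - d1 i + a2 * d2 i)
       (fun i => pb2 i - d2 i + a1 * d1 i) d1 d2).
Proof.
  split.
  - assert (Hbound : bound (valuesQ N h1 h2 s1 s2 a1 a2 E1 E2)).
    { eexists; intros v [pb1 [pb2 [HQ ->]]].
      now apply objQ_le_total with (E1 := E1) (E2 := E2). }
    assert (Hne : exists v, valuesQ N h1 h2 s1 s2 a1 a2 E1 E2 v)
      by (eexists; exists (fun _ => 0), (fun _ => 0);
          split; [now apply feasibleQ_zero | reflexivity]).
    destruct (completeness _ Hbound Hne) as [v Hv].
    exists v; split; [|exact Hv].
    apply (is_lub_of_cofinal _ _ v Hv).
    + intros w [q1 [q2 [e1 [e2 [HP ->]]]]].
      destruct (objP_le_objQ h1 h2 s1 s2 a1 a2 Hh1 Hh2 Hs1 Hs2 Ha1 Ha2 N E1 E2 HE1 HE2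
        q1 q2 e1 e2 HP) as [pb1 [pb2 [HQ Hle]]].
      eexists; split; [now exists pb1, pb2 | exact Hle].
    + intros w eps [pb1 [pb2 [HQ ->]]] Heps; now apply objQ_approx_by_objP.
  - intros pb1 pb2 d1 d2 [HQ Hopt] Hmax.
    assert (Hobj : objP N h1 h2 s1 s2 (fun i => pb1 i - d1 i + a2 * d2 i)
                     (fun i => pb2 i - d2 i + a1 * d1 i) = objQ N h1 h2 s1 s2 a1 a2 pb1 pb2).
    { apply psum_eq; intros i Hi; symmetry; now apply Rfun_of_maximizer, Hmax. }
    split.
    + apply feasibleQ_feasibleP; try lra; [exact HQ|].
      intros i Hi; destruct (Hmax i Hi) as [Hd1 [Hd2 _]]; auto.
    + intros q1 q2 e1 e2 HP; rewrite Hobj.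
      destruct (objP_le_objQ h1 h2 s1 s2 a1 a2 Hh1 Hh2 Hs1 Hs2 Ha1 Ha2 N E1 E2 HE1 HE2
        q1 q2 e1 e2 HP) as [c1 [c2 [HQ' Hle]]].
      specialize (Hopt c1 c2 HQ'); lra.
Qed.
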